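(* Let $n\ge 2$, $p=n-1$, and let $m_0,\dots,m_p,m_n$ and the integers $q,r,q_z,r_z,\varepsilon,\upsilon,w$ be as in the context. Let $I\subseteq K[x_0,\dots,x_n]$ ($K$ a field) be the monomial ideal generated by $x_ix_p^{q}$ for $r\le i\le p$; $x_jx_p^{\,q-q_z-\varepsilon}x_n^{\upsilon-w}$ for $\varepsilon p+r-r_z\le j\le p$; $x_n^{\upsilon}$; $x_ix_j$ for $1\le i\le j\le p-1$. (This ideal $I$ is the initial ideal $\mathrm{in}(P)$ of the defining ideal $P$ of the monomial curve $x_i=t^{m_i}$, i.e. $P=\ker(K[x_0,\dots,x_n]\to K[t],\ x_i\mapsto t^{m_i})$, with respect to the grevlex order with $x_0<x_1<\dots<x_n$ refined by the grading $\mathrm{wt}(x_i)=m_i$.) Then $I$ is Ratliff-Rush closed, i.e. $\widetilde{I}=I$.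
   Context: Ratliff-Rush closure: for an ideal $I$ of a commutative Noetherian ring $R$ containing a nonzerodivisor, $\widetilde I=\bigcup_{k\ge1}(I^{k+1}:I^k)$, where $I^{k+1}:I^k=\{x\in R: xI^k\subseteq I^{k+1}\}$; $I$ is Ratliff-Rush closed if $\widetilde I=I$. Setup: $n\ge2$, $p=n-1$; $m_0<m_1<\dots<m_p$ are positive integers forming an arithmetic sequence, $m_n$ is an arbitrary positive integer, $\gcd(m_0,\dots,m_n)=1$, and $m_0,\dots,m_p,m_n$ minimally generate the numerical semigroup $\Gamma=\sum_{i=0}^n\mathbb N_0m_i$. Put $\Gamma'=\sum_{i=0}^p\mathbb N_0 m_i$. For an integer $t\ge0$ define $q_t\in\mathbb Z$, $r_t\in[1,p]$ by $t=q_tp+r_t$, and $g_t=q_tm_p+m_{r_t}\in\Gamma'$. Let $S=\{\gamma\in\Gamma:\gamma-m_0\notin\Gamma\}$, $u=\min\{t\ge0: g_t\notin S\}$, $\upsilon=\min\{b\ge1: bm_n\in\Gamma'\}$. There are unique integers $w\in[0,\upsilon-1]$, $z\in[0,u-1]$, $\lambda\ge1$, $\mu\ge0$ with $g_u=\lambda m_0+wm_n$ and $\upsilon m_n=\mu m_0+g_z$. Set $q=q_u$, $r=r_u$, and $\varepsilon=0$ if $r>r_z$, $\varepsilon=1$ if $r\le r_z$. *)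

From mathcomp Require Import all_boot all_algebra.
From mathcomp Require Export mpoly.
Set Implicit Arguments. Unset Strict Implicit. Unset Printing Implicit Defensive.
Import GRing.Theory Num.Theory.

Local Open Scope ring_scope.

Definition ideal_span {R : comRingType} (A : R -> Prop) (f : R) : Prop :=
  exists (k : nat) (c a : 'I_k -> R),
    (forall i, A (a i)) /\ f = \sum_(i < k) c i * a i.

Definition ideal_mul {R : comRingType} (A B : R -> Prop) : R -> Prop :=
  ideal_span (fun x => exists a b, A a /\ B b /\ x = a * b).

Fixpoint ideal_pow {R : comRingType} (I : R -> Prop) (k : nat) : R -> Prop :=
  match k with
  | 0 => ideal_span (fun x => x = 1)
  | k'.+1 => ideal_mul I (ideal_pow I k')
  end.

Definition ideal_colon {R : comRingType} (J L : R -> Prop) (x : R) : Prop :=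
  forall y, L y -> J (x * y).

Definition ratliff_rush {R : comRingType} (I : R -> Prop) (x : R) : Prop :=
  exists k, (1 <= k)%N /\ ideal_colon (ideal_pow I k.+1) (ideal_pow I k) x.

Definition rr_closed {R : comRingType} (I : R -> Prop) : Prop :=
  forall x, ratliff_rush I x <-> I x.

Local Close Scope ring_scope.

Definition in_sg (k : nat) (m : nat -> nat) (g : nat) : Prop :=
  exists c : nat -> nat, g = \sum_(i < k) c i * m i.

Definition apery (n : nat) (m : nat -> nat) (g : nat) : Prop :=
  in_sg n.+1 m g /\ ~ (m 0 <= g /\ in_sg n.+1 m (g - m 0)).

(* t = q_t p + r_t with r_t in [1,p] *)
Definition qt (p t : nat) : int :=
  if t is t'.+1 then (t' %/ p)%:Z else (-1)%R.
Definition rt (p t : nat) : nat :=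
  if t is t'.+1 then (t' %% p).+1 else p.
(* g_t = q_t m_p + m_{r_t} (= 0 for t = 0) *)
Definition gt (p : nat) (m : nat -> nat) (t : nat) : nat :=
  if t is t'.+1 then t' %/ p * m p + m (t' %% p).+1 else 0.

Definition Xv (K : fieldType) (n i : nat) : {mpoly K[n.+1]} := 'X_(inord i).

From mathcomp Require Import all_boot all_algebra.
From mathcomp Require Import mpoly.
From mathcomp Require Import zify.
From Stdlib Require Import Classical.
Import GRing.Theory Num.Theory.

(* I is a monomial ideal, so x (I^k) is contained in I^(k+1) forces, for every
   monomial x^a of x and every generator g, that x^a g^k is divisible by a
   product of k+1 generators.  Suppose x^a is not in I.  In such a product every
   factor has larger degree than x^a in the variable that g^k shifts, since it
   divides x^a in all other variables.  Take g = x_p^(q+1): the degree of x^a in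
   x_1..x_(p-1) is at most 1 (otherwise some x_i x_j divides it), and counting
   x_p-degrees then shows that some factor involves x_n, so deg_(x_n) x^a >= v-w.
   Take g = x_n^v: now every factor has x_n-degree > v-w, hence is x_n^v, which
   forces deg_(x_n) x^a >= v, i.e. x_n^v divides x^a. *)

Set Implicit Arguments.
Unset Strict Implicit.
Unset Printing Implicit Defensive.

Section IdealSpan.
Local Open Scope ring_scope.
Variables (R : comNzRingType) (A : R -> Prop).

Lemma ideal_span_gen a : A a -> ideal_span A a.
Proof.
by exists 1%N, (fun _ => 1), (fun _ => a); split => //; rewrite big_ord1 mul1r.
Qed.

Lemma ideal_span0 : ideal_span A 0.
Proof. by exists 0%N, (fun _ => 0), (fun _ => 0); split; [case | rewrite big_ord0]. Qed.

Lemma ideal_spanD f g : ideal_span A f -> ideal_span A g -> ideal_span A (f + g).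
Proof.
move=> [k1 [c1 [a1 [A1 ->]]]] [k2 [c2 [a2 [A2 ->]]]].
pose cat_fun (F1 : 'I_k1 -> R) (F2 : 'I_k2 -> R) (i : 'I_(k1 + k2)) :=
  match split i with inl i1 => F1 i1 | inr i2 => F2 i2 end.
exists (k1 + k2)%N, (cat_fun c1 c2), (cat_fun a1 a2); split.
  by move=> i; rewrite /cat_fun; case: (split i).
rewrite big_split_ord /cat_fun; congr (_ + _); apply: eq_bigr => i _.
  by rewrite (unsplitK (inl i)).
by rewrite (unsplitK (inr i)).
Qed.

Lemma ideal_spanMl c f : ideal_span A f -> ideal_span A (c * f).
Proof.
move=> [k [c1 [a [Aa ->]]]]; exists k, (fun i => c * c1 i), a; split => //.
by rewrite mulr_sumr; apply: eq_bigr => i _; rewrite mulrA.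
Qed.

End IdealSpan.

Lemma ideal_pow_expr (R : comNzRingType) (I : R -> Prop) a k :
  I a -> ideal_pow I k (a ^+ k)%R.
Proof.
move=> Ia; elim: k => [|k IH] /=; apply: ideal_span_gen; first by rewrite expr0.
by exists a, (a ^+ k)%R; rewrite exprS.
Qed.

Lemma ratliff_rush_ge (R : comNzRingType) (I : R -> Prop) x : I x -> ratliff_rush I x.
Proof. by move=> Ix; exists 1%N; split => // y Iy; apply: ideal_span_gen; exists x, y. Qed.

Lemma leq_sum_all (T : Type) (f : T -> nat) c (s : seq T) :
  all (fun x => c <= f x) s -> size s * c <= \sum_(x <- s) f x.
Proof.
elim: s => [|x s IH] /=; first by rewrite big_nil.
by case/andP => cx /IH; rewrite big_cons mulSn; apply: leq_add.
Qed.

Lemma sum_all_eq (T : Type) (f : T -> nat) c (s : seq T) :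
  all (fun x => f x == c) s -> \sum_(x <- s) f x = size s * c.
Proof.
elim: s => [|x s IH] /=; first by rewrite big_nil.
by case/andP => /eqP fx /IH; rewrite big_cons mulSn fx => ->.
Qed.

Lemma all_leq_sum (T : Type) (f : T -> nat) (s : seq T) :
  all (fun x => f x <= \sum_(y <- s) f y) s.
Proof.
elim: s => //= x s IH; rewrite big_cons leq_addr /=.
by apply: sub_all IH => y /leq_trans; apply; apply: leq_addl.
Qed.

Lemma leq_sum_nat_term (f : nat -> nat) a b i :
  a <= i < b -> f i <= \sum_(a <= j < b) f j.
Proof.
case/andP => ai ib; rewrite (big_cat_nat ai (ltnW ib)) (big_ltn ib) /=.
by rewrite addnCA leq_addr.
Qed.

Lemma sum_nat_ge1 (f : nat -> nat) a b :
  0 < \sum_(a <= j < b) f j -> exists2 i, a <= i < b & 0 < f i.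
Proof.
rewrite lt0n sum_nat_seq_neq0 => /hasP [i]; rewrite mem_index_iota => ai fi.
by exists i; rewrite // lt0n.
Qed.

Lemma sum_nat_ge2 (f : nat -> nat) a b : 2 <= \sum_(a <= j < b) f j ->
  exists i i', [/\ a <= i <= i', i' < b & forall j, (i == j) + (i' == j) <= f j].
Proof.
elim: b => [|b IH]; first by rewrite big_geq.
case: (leqP a b) => [ab|ba]; last by rewrite big_geq.
rewrite big_nat_recr //=.
case: (leqP 2 (\sum_(a <= j < b) f j)) => [/IH [i [i' [ii' i'b fii']]] _|lt2].
  by exists i, i'; split => //; apply: ltnW.
case: (leqP 2 (f b)) => [fb _|fb ge2].
  exists b, b; split => // [|j]; first by rewrite ab leqnn.
  by case: (b =P j) => [<-|_]; lia.
have [i /andP [ai ib] fi] := @sum_nat_ge1 f a b (ltac:(lia)).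
exists i, b; split => // [|j]; first by rewrite ai ltnW.
case: (i =P j) => [<-|_]; first by rewrite (gtn_eqF ib) addn0.
by case: (b =P j) => [<-|_]; lia.
Qed.

Section MonomialIdeal.
Local Open Scope ring_scope.
Variables (K : fieldType) (N : nat) (T : Type) (valid : pred T) (mono : T -> 'X_{1..N}).

Definition monomial_gen (f : {mpoly K[N]}) := exists2 t, valid t & f = 'X_[mono t].

Definition dvd_gen (m : 'X_{1..N}) := exists2 t, valid t & (mono t <= m)%MM.

Definition dvd_gen_prod (k : nat) (m : 'X_{1..N}) :=
  exists ts : seq T, [/\ all valid ts, size ts = k & (\sum_(t <- ts) mono t <= m)%MM].

Definition msupp_in (Q : 'X_{1..N} -> Prop) (f : {mpoly K[N]}) :=
  forall m, m \in msupp f -> Q m.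

Lemma msupp_in_span (Q : 'X_{1..N} -> Prop) (A : {mpoly K[N]} -> Prop) f :
  (forall m m', (m <= m')%MM -> Q m -> Q m') ->
  (forall a, A a -> msupp_in Q a) -> ideal_span A f -> msupp_in Q f.
Proof.
move=> upQ QA [k [c [a [Aa ->]]]].
apply: (big_ind (msupp_in Q)) => [m|g1 g2 Qg1 Qg2 m|i _ m]; first by rewrite msupp0.
  by move/msuppD_le; rewrite mem_cat => /orP[/Qg1|/Qg2].
move/msuppM_le/allpairsP => [[m1 m2] /= [_ m2a ->]].
exact: upQ (lem_addl m1 m2) (QA _ (Aa i) _ m2a).
Qed.

Lemma msupp_ideal_pow (G : {mpoly K[N]} -> Prop) k f :
  (forall g, G g -> monomial_gen g) ->
  ideal_pow (ideal_span G) k f -> msupp_in (dvd_gen_prod k) f.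
Proof.
move=> Gmono; elim: k f => [|k IH] f /=.
  move=> _ m _; exists [::]; split => //; rewrite big_nil.
  by apply/mnm_lepP => i; rewrite mnm0E.
apply: msupp_in_span.
  move=> m m' le_mm' [ts [ts_valid size_ts le_ts]].
  by exists ts; split => //; apply: lepm_trans le_mm'.
move=> _ [a [b [Ia [Ikb ->]]]] m /msuppM_le/allpairsP [[m1 m2] /= [m1a m2b ->]].
have [t tv le_t] : dvd_gen m1.
  apply: (msupp_in_span _ _ Ia m1a) => [m' m'' le_m' [t tv le_t]|g /Gmono [t tv ->] m'].
    by exists t => //; apply: lepm_trans le_m'.
  by rewrite msuppX mem_seq1 => /eqP ->; exists t => //; apply: lepm_refl.
have [ts [ts_valid size_ts le_ts]] := IH b Ikb m2 m2b.
exists (t :: ts); split; [by rewrite /= tv | by rewrite /= size_ts |].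
apply/mnm_lepP => i; rewrite big_cons !mnmDE.
by apply: leq_add; [apply: (mnm_lepP le_t) | apply: (mnm_lepP le_ts)].
Qed.

Lemma monomial_ideal_mem (G : {mpoly K[N]} -> Prop) f :
  (forall g, monomial_gen g -> G g) ->
  (forall m, m \in msupp f -> dvd_gen m) -> ideal_span G f.
Proof.
move=> monoG dvdf; rewrite (mpolyE f) big_seq.
apply: (big_ind (ideal_span G)); [exact: ideal_span0 | exact: ideal_spanD |].
move=> m /dvdf [t tv le_t].
rewrite -(submK le_t) mpolyXD scalerAl.
by apply/ideal_spanMl/ideal_span_gen/monoG; exists t.
Qed.

Lemma rr_closed_monomial (G : {mpoly K[N]} -> Prop) a c :
  (forall g, G g <-> monomial_gen g) -> valid a -> valid c ->
  (forall k m, dvd_gen_prod k.+1 (mono a *+ k + m) ->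
               dvd_gen_prod k.+1 (mono c *+ k + m) -> dvd_gen m) ->
  rr_closed (ideal_span G).
Proof.
move=> Gmono va vc cancel x; split; last exact: ratliff_rush_ge.
case=> k [_ colon]; apply: monomial_ideal_mem => [g /Gmono //|m mx].
have shifted d : valid d -> dvd_gen_prod k.+1 (mono d *+ k + m).
  move=> vd; have Ik1 : ideal_pow (ideal_span G) k.+1 (x * 'X_[mono d *+ k]).
    rewrite -mpolyXn; apply/colon/ideal_pow_expr/ideal_span_gen/Gmono.
    by exists d.
  apply: (msupp_ideal_pow _ Ik1) => [g /Gmono //|].
  by rewrite (perm_mem (msuppMX _ _)); apply: map_f.
exact: cancel (shifted a va) (shifted c vc).
Qed.

End MonomialIdeal.

Inductive gen_index := GA of nat | GB of nat | GC | GD of nat & nat.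

Section Generators.
Variables (n q e t v r b : nat).
Hypotheses (n_gt1 : 1 < n) (r_gt0 : 0 < r) (r_le_p : r <= n.-1).
Local Notation p := n.-1.

Definition gdeg (g : gen_index) (j : nat) : nat :=
  match g with
  | GA i => (i == j) + (p == j) * q
  | GB i => (i == j) + (p == j) * e + (n == j) * t
  | GC => (n == j) * v
  | GD i i' => (i == j) + (i' == j)
  end.

Definition gvalid (g : gen_index) : bool :=
  match g with
  | GA i => r <= i <= p
  | GB i => b <= i <= p
  | GC => true
  | GD i i' => [&& 0 < i, i <= i' & i' < p]
  end.

Definition gsum (gs : seq gen_index) (j : nat) := \sum_(g <- gs) gdeg g j.

Definition mid_deg (f : nat -> nat) := \sum_(1 <= j < p) f j.

Let p_gt0 : 0 < p. Proof. lia. Qed.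
Let p_lt_n : p < n. Proof. lia. Qed.

Lemma gdeg_p_mid_ge g : gvalid g -> 0 < gdeg g p -> gdeg g n < t ->
  q.+1 <= gdeg g p + mid_deg (gdeg g).
Proof.
case: g => [i|i||i i'] /= vg; rewrite ?eqxx ?(ltn_eqF p_lt_n) ?(gtn_eqF p_lt_n) /=.
- case: (i =P p) => [_|ip] _ _ /=; first by lia.
  have gi : 0 < gdeg (GA i) i by rewrite /= eqxx.
  have := leq_trans gi (@leq_sum_nat_term (gdeg (GA i)) 1 p i (ltac:(lia))).
  by rewrite /mid_deg; lia.
- by move=> _; rewrite mul0n addn0 mul1n ltnNge leq_addl.
- by [].
- case/and3P: vg => _ ii' i'p.
  by rewrite (ltn_eqF i'p) (ltn_eqF (leq_ltn_trans ii' i'p)).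
Qed.

Lemma gdeg_n_gt_t g : gvalid g -> t < gdeg g n -> gdeg g n = v.
Proof.
case: g => [i|i||i i'] /= vg; rewrite ?eqxx ?(gtn_eqF p_lt_n) /= ?mul1n //.
- by rewrite ltn_eqF //; lia.
- by rewrite ltn_eqF ?ltnn //; lia.
- by rewrite !ltn_eqF //; lia.
Qed.

Section Fit.
Variable mv : nat -> nat.
Hypothesis no_fit : forall g, gvalid g -> ~ (forall j, j <= n -> gdeg g j <= mv j).

Lemma mid_deg_le1 : mid_deg mv <= 1.
Proof.
rewrite leqNgt; apply/negP => /sum_nat_ge2 [i [i' [/andP [i0 ii'] i'p fit]]].
by apply: (no_fit (g := GD i i')) => [|j _]; rewrite /= ?i0 ?ii'.
Qed.

Lemma gsum_shift_gt gs x : all gvalid gs ->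
  (forall j, j <= n -> j != x -> gsum gs j <= mv j) ->
  all (fun g => mv x < gdeg g x) gs.
Proof.
elim: gs => //= g gs IH /andP [vg vgs] le_sum; apply/andP; split.
  rewrite ltnNge; apply/negP => le_x; apply: (no_fit vg) => j jn.
  case: (eqVneq j x) => [-> //|jx].
  by have := le_sum j jn jx; rewrite /gsum big_cons; lia.
apply: IH => // j jn jx.
by have := le_sum j jn jx; rewrite /gsum big_cons; lia.
Qed.

Lemma shiftA_deg_n_ge k gs : all gvalid gs -> size gs = k.+1 ->
  (forall j, j <= n -> gsum gs j <= mv j + gdeg (GA p) j * k) -> t <= mv n.
Proof.
move=> vgs size_gs le_sum; rewrite leqNgt; apply/negP => lt_n.
have shiftA j : gdeg (GA p) j = (p == j) * q.+1 by rewrite /=; case: (p == j); lia.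
have gt_p : all (fun g => mv p < gdeg g p) gs.
  apply: gsum_shift_gt => // j jn jp; have := le_sum j jn.
  by rewrite shiftA eq_sym (negbTE jp) mul0n addn0.
have lt_t : all (fun g => gdeg g n < t) gs.
  apply: sub_all (all_leq_sum (gdeg^~ n) gs) => g /leq_ltn_trans; apply.
  by have := le_sum n (leqnn n); rewrite shiftA (ltn_eqF p_lt_n) /gsum; lia.
have pureA : all (fun g => q.+1 <= gdeg g p + mid_deg (gdeg g)) gs.
  have : all [predI gvalid & [predI (fun g => mv p < gdeg g p) & (fun g => gdeg g n < t)]] gs.
    by rewrite !all_predI vgs gt_p lt_t.
  by apply: sub_all => g /and3P [vg gp gn]; apply: gdeg_p_mid_ge => //; lia.
have mid_le : mid_deg (gsum gs) <= 1.
  apply: leq_trans mid_deg_le1; rewrite /mid_deg big_nat_cond [X in _ <= X]big_nat_cond.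
  apply: leq_sum => j /andP [/andP [_ jp] _].
  by have := le_sum j (ltnW (ltn_trans jp p_lt_n)); rewrite shiftA (gtn_eqF jp); lia.
have := leq_sum_all pureA; rewrite big_split /= /mid_deg exchange_big /= -/(mid_deg _).
move: mid_le; have := leq_sum_all gt_p; have := le_sum p (ltnW p_lt_n).
rewrite shiftA eqxx size_gs /gsum; nia.
Qed.

Lemma shiftC_contra k gs : t <= mv n -> all gvalid gs -> size gs = k.+1 ->
  (forall j, j <= n -> gsum gs j <= mv j + gdeg GC j * k) -> False.
Proof.
move=> t_le vgs size_gs le_sum.
have gt_n : all (fun g => mv n < gdeg g n) gs.
  apply: gsum_shift_gt => // j jn jn'; have := le_sum j jn.
  by rewrite /= eq_sym (negbTE jn') !mul0n addn0.
have eq_v : all (fun g => gdeg g n == v) gs.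
  have : all [predI gvalid & (fun g => mv n < gdeg g n)] gs by rewrite all_predI vgs gt_n.
  by apply: sub_all => g /andP [vg gn]; apply/eqP/gdeg_n_gt_t => //; lia.
have := leq_sum_all gt_n; have := le_sum n (leqnn n).
rewrite /gsum (sum_all_eq eq_v) /= eqxx size_gs; nia.
Qed.

End Fit.

Section Polynomials.
Variable K : fieldType.
Local Open Scope ring_scope.

Definition gmono (g : gen_index) : 'X_{1..n.+1} := [multinom gdeg g j | j < n.+1].

Definition gen_poly (g : gen_index) : {mpoly K[n.+1]} :=
  match g with
  | GA i => Xv K n i * Xv K n p ^+ q
  | GB i => Xv K n i * Xv K n p ^+ e * Xv K n n ^+ t
  | GC => Xv K n n ^+ v
  | GD i i' => Xv K n i * Xv K n i'
  end.

Lemma mpolyX_gmono g : gvalid g -> 'X_[gmono g] = gen_poly g.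
Proof.
have XvE i : Xv K n i = 'X_[U_(inord i)] by [].
have inord_eq i (j : 'I_n.+1) : (i <= n)%N -> (inord i == j) = (i == j :> nat).
  by move=> i_le; rewrite -val_eqE /= inordK.
case: g => [i|i||i i'] /= vg; rewrite !XvE ?mpolyXn -?mpolyXD; congr mpolyX.
all: apply/mnmP => j; rewrite mnmE ?mnmDE ?mulmnE !mnm1E !inord_eq //; lia.
Qed.

Lemma gmono_cancel k m :
  dvd_gen_prod gvalid gmono k.+1 (gmono (GA p) *+ k + m) ->
  dvd_gen_prod gvalid gmono k.+1 (gmono GC *+ k + m) ->
  dvd_gen gvalid gmono m.
Proof.
pose mv j := m (inord j).
have coord d gs : (\sum_(g <- gs) gmono g <= gmono d *+ k + m)%MM ->
    forall j, (j <= n)%N -> (gsum gs j <= mv j + gdeg d j * k)%N.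
  move=> /mnm_lepP le_gs j jn; have := le_gs (inord j).
  rewrite mnm_sumE mnmDE mulmnE mnmE inordK // addnC.
  by under eq_bigr do rewrite mnmE inordK //.
move=> [gs1 [v1 s1 le1]] [gs2 [v2 s2 le2]]; apply: NNPP => nodvd.
have no_fit g : gvalid g -> ~ (forall j, (j <= n)%N -> (gdeg g j <= mv j)%N).
  move=> vg fit; apply: nodvd; exists g => //; apply/mnm_lepP => j.
  by rewrite mnmE; have := fit j (ltn_ord j); rewrite /mv inord_val.
have t_le := shiftA_deg_n_ge no_fit v1 s1 (coord _ _ le1).
apply: (shiftC_contra no_fit t_le v2 s2); exact: coord _ _ le2.
Qed.

Lemma rr_closed_gen_ideal (G : {mpoly K[n.+1]} -> Prop) :
  (forall f, G f <-> exists2 g, gvalid g & f = gen_poly g) -> rr_closed (ideal_span G).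
Proof.
move=> Ggen; apply: (rr_closed_monomial (a := GA p) (c := GC) _ _ _ gmono_cancel) => //.
  move=> f; rewrite Ggen.
  by split=> -[g vg ->]; exists g; rewrite ?mpolyX_gmono.
by rewrite /= r_le_p leqnn.
Qed.

End Polynomials.
End Generators.

Lemma rt_bounds p u : 0 < p -> 0 < rt p u <= p.
Proof. by move=> p_gt0; case: u => [|u] /=; rewrite ?p_gt0 ?leqnn ?ltn_pmod. Qed.

Theorem mainTheorem1 (K : fieldType) (n : nat) (m : nat -> nat)
    (u v w z lam mu : nat) :
  (2 <= n)%N ->
  let p := n.-1 in
  (0 < m 0)%N ->
  (exists d, (0 < d)%N /\ forall i, (i <= p)%N -> m i = (m 0 + i * d)%N) ->
  (0 < m n)%N ->
  \big[gcdn/0%N]_(i < n.+1) m i = 1%N ->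
  (forall i, (i <= n)%N ->
     ~ exists c : nat -> nat,
         m i = (\sum_(j < n.+1 | (j : nat) != i) c j * m j)%N) ->
  ~ apery n m (gt p m u) ->
  (forall t, (t < u)%N -> apery n m (gt p m t)) ->
  (1 <= v)%N -> in_sg n m (v * m n) ->
  (forall b, (1 <= b < v)%N -> ~ in_sg n m (b * m n)) ->
  (w < v)%N -> (z < u)%N -> (1 <= lam)%N ->
  gt p m u = (lam * m 0 + w * m n)%N ->
  (v * m n = mu * m 0 + gt p m z)%N ->
  let q := (u.-1 %/ p)%N in
  let r := rt p u in
  let eps := if (rt p z < r)%N then 0%N else 1%N in
  let e := absz (qt p u - qt p z - eps%:Z)%R in
  let X := Xv K n in
  rr_closed (ideal_span (fun f : {mpoly K[n.+1]} =>
       (exists i, (r <= i <= p)%N /\ f = (X i * X p ^+ q)%R)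
    \/ (exists j, ((eps * p + r)%:Z - (rt p z)%:Z <= j%:Z)%R /\ (j <= p)%N /\
                  f = (X j * X p ^+ e * X n ^+ (v - w))%R)
    \/ f = (X n ^+ v)%R
    \/ (exists i j, (1 <= i <= j)%N /\ (j <= p.-1)%N /\ f = (X i * X j)%R))).
Proof.
move=> n_ge2 p _ _ _ _ _ _ _ _ _ _ _ _ _ _ _ q r eps e X.
have p_gt0 : 0 < p by rewrite /p; lia.
have /andP [r_gt0 r_le_p] := rt_bounds u p_gt0.
apply: (rr_closed_gen_ideal (q := q) (e := e) (t := v - w) (v := v)
          (b := eps * p + r - rt p z) n_ge2 r_gt0 r_le_p) => f.
split.
- case=> [[i [i_range ->]]|[[j [j_low [j_le ->]]]|[->|[i [j [ij [j_le ->]]]]]]].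
  + by exists (GA i).
  + by exists (GB j) => //=; rewrite -/p j_le andbT; lia.
  + by exists GC.
  + by exists (GD i j) => //=; rewrite -/p; lia.
- case=> -[i|j||i j] /=; rewrite -/p => g_valid ->.
  + by left; exists i.
  + by right; left; exists j; split; [lia | split; [lia | ]].
  + by right; right; left.
  + by right; right; right; exists i, j; split; [lia | split; [lia | ]].
Qed.
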